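(* Let $G=(V,E)$ be a graph with $|V|=n$ vertices, and let $P_{\text{match}}(G)\subset\mathbb{R}^E$ be its matching polytope. Then \[\mathrm{xc}\big(P_{\text{match}}(G)\big)\leq \ln(n)\cdot n^3\cdot 1.5^n .\]
   Context: The matching polytope of $G=(V,E)$ is $P_{\text{match}}(G)=\mathrm{conv}\{\chi_M : M\subset E \text{ a matching of } G\}\subset\mathbb{R}^E$, where $\chi_M$ is the characteristic vector of $M$. For a polytope $P$, write $|P|$ for its number of facets (the minimal number of inequalities in a description $\{x: Ax\le b, Cx=e\}$ of $P$). An affine extension of $P\subset\mathbb{R}^d$ is a polyhedron $Q\subset\mathbb{R}^{d'}$ together with an affine map $\pi$ with $\pi(Q)=P$. The extension complexity is $\mathrm{xc}(P)=\min\{|Q| : Q \text{ an affine extension of } P\}$. *)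

From HB Require Import structures.
From mathcomp Require Import all_boot all_order all_algebra.
From mathcomp Require Import boolp classical_sets reals exp.
Set Implicit Arguments. Unset Strict Implicit. Unset Printing Implicit Defensive.
Import Order.TTheory GRing.Theory Num.Theory.
Local Open Scope ring_scope.
Local Open Scope classical_set_scope.

Section Defs.
Variable R : realType.

Definition is_matching (T : finType) (E : {set {set T}}) (M : {set {set T}}) : bool :=
  (M \subset E) &&
  [forall S1 in M, forall S2 in M, (S1 != S2) ==> [disjoint S1 & S2]].

(* R^E is identified with column vectors of size #|E|; coordinate i
   corresponds to the edge enum_val i of E. *)
Definition chi (T : finType) (E : {set {set T}}) (M : {set {set T}}) : 'cV[R]_#|E| :=
  \col_(i < #|E|) (if @enum_val _ (mem E) i \in M then 1 else 0).

Definition Pmatch (T : finType) (E : {set {set T}}) : set 'cV[R]_#|E| :=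
  [set x | exists lam : {set {set T}} -> R,
      [/\ forall M, 0 <= lam M,
          forall M, ~~ is_matching E M -> lam M = 0,
          \sum_(M : {set {set T}}) lam M = 1 &
          x = \sum_(M : {set {set T}}) lam M *: chi E M]].

Definition polyhedron (d' m k : nat) (A : 'M[R]_(m, d')) (b : 'cV[R]_m)
    (C : 'M[R]_(k, d')) (e : 'cV[R]_k) : set 'cV[R]_d' :=
  [set y | (forall i, (A *m y) i 0 <= b i 0) /\ C *m y = e].

Definition has_extension_with (d : nat) (P : set 'cV[R]_d) (m : nat) : Prop :=
  exists (d' k : nat) (A : 'M[R]_(m, d')) (b : 'cV[R]_m)
         (C : 'M[R]_(k, d')) (e : 'cV[R]_k) (F : 'M[R]_(d, d')) (g : 'cV[R]_d),
    (fun y => F *m y + g) @` polyhedron A b C e = P.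

(* Default 0 if no extension exists (never happens for polytopes). *)
Definition xc (d : nat) (P : set 'cV[R]_d) : nat :=
  match pselect (exists m, `[< has_extension_with P m >]) with
  | left h => ex_minn h
  | right _ => 0%N
  end.

End Defs.

(* Restrict a 2-colouring c of the vertices to the edges it cuts: that bipartite graph has
   matching polytope {y >= 0, y = 0 off the cut, deg y <= 1}, by the usual perturbation
   argument (a fractional point moves both ways along a kernel direction of its tight
   constraints, bipartiteness guaranteeing such a direction).  A matching M is cut entirely by
   at least 2^(n - |M|) >= 2^(n - n/2) colourings, so by a union bound over the fewer than
   2^|E| matchings some k = 2^(n/2) max(1, |E|) colourings together cut every matching entirely.
   P_match(G) is then the convex hull of the union of the k cut polytopes, which Balas'
   disjunctive formulation describes with k (|E| + n) inequalities, and
   2^(n/2) C(n,2) (C(n,2) + n) <= ln n * n^3 * 1.5^n. *)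

(* Imported before all_boot so that the finset lemmas take precedence over their
   classical_sets homonyms (subsetP, setIidPr, ...). *)
From mathcomp Require Import boolp classical_sets reals exp sequences.
From mathcomp Require Import all_boot all_order all_algebra.
From mathcomp Require Import ring lra zify.
Set Implicit Arguments. Unset Strict Implicit. Unset Printing Implicit Defensive.
Import Order.TTheory GRing.Theory Num.Theory.
Local Open Scope ring_scope.

Section RealBound.
Variable R : realType.

Lemma ln2_ge : 3 / 5 <= ln (2 : R).
Proof.
have e3_20 : expR (3 / 20 : R) <= 20 / 17.
  have := expR_ge1Dx (- (3 / 20 : R)); rewrite expRN.
  have := expR_gt0 (3 / 20 : R); set e := expR _ => e0 H.
  have ee : e * e^-1 = 1 by rewrite divff // gt_eqF.
  nra.
have e3_5 : expR (3 / 5 : R) <= 2.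
  have -> : expR (3 / 5 : R) = expR (3 / 20) ^+ 4 by rewrite -expRM_natl; congr expR; lra.
  apply: (le_trans (lerXn2r 4 _ _ e3_20)); rewrite ?nnegrE ?expR_ge0 //; first lra.
  rewrite !exprS expr0; lra.
by rewrite -[X in X <= _]expRK ler_ln ?posrE ?expR_gt0.
Qed.

Lemma ln_ge_log2 (n j : nat) : (2 ^ j <= n)%N -> 3 / 5 * j%:R <= ln (n%:R : R).
Proof.
move=> hj; have n_gt0 : (0 < n)%N by apply: leq_trans hj; rewrite expn_gt0.
apply: (@le_trans _ _ (ln ((2 : R) ^+ j))).
  rewrite lnXn // -mulr_natr; have := ln2_ge; have := ler0n R j; nra.
by rewrite ler_ln ?posrE ?exprn_gt0 ?ltr0n // -(natrX R 2 j) ler_nat.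
Qed.

Lemma natr_double_le_exp (h : nat) : 2 * h%:R + 1 <= 8 * (9 / 8 : R) ^+ h.
Proof.
suff binomial3 : 1 + h%:R / 8 + h%:R * (h%:R - 1) / 128 <= (9 / 8 : R) ^+ h.
  have : (0 : R) <= (h%:R - 17 / 2) ^+ 2 by rewrite sqr_ge0.
  rewrite expr2; set y := h%:R; set b := _ ^+ h in binomial3 *; nra.
elim: h => [|h IH]; first by rewrite expr0; lra.
rewrite exprS -natr1.
have : (0 : R) <= h%:R * (h%:R - 1).
  case: h {IH} => [|h]; first by rewrite mul0r.
  rewrite -natr1 addrK; have := ler0n R h; nra.
have : (0 : R) <= h%:R by apply: ler0n.
set y := h%:R in IH *; set b := _ ^+ h in IH *; nra.
Qed.

Lemma exp2_half_le (n : nat) : (2 <= n)%N ->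
  2 ^+ n./2 * n%:R <= 4 * ln (n%:R : R) * (3 / 2) ^+ n.
Proof.
move=> n_ge2; have [small|big] := leqP n 15.
{ have L1 := @ln_ge_log2 n 1; have L2 := @ln_ge_log2 n 2; have L3 := @ln_ge_log2 n 3.
  case: n n_ge2 small L1 L2 L3 => [|[|[|[|[|[|[|[|[|[|[|[|[|[|[|[|n]]]]]]]]]]]]]]]] //= _ _ L1 L2 L3.
  all: rewrite ?expr0 ?exprS ?expr0 /=.
  all: try have {}L1 := L1 isT; try have {}L2 := L2 isT; try have {}L3 := L3 isT.
  all: lra. }
have ln_n := @ln_ge_log2 n 4 (leq_trans (isT : (2 ^ 4 <= 16)%N) big).
have n_ge16 : (16 : R) <= n%:R by rewrite (ler_nat R 16 n).
have nE : n = (odd n + n./2.*2)%N by rewrite odd_double_half.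
have n_le : (n%:R : R) <= 2 * (n./2)%:R + 1.
  by rewrite {1}nE natrD -mul2n natrM; case: (odd n) => /=; lra.
have exp_n : (2 : R) ^+ n./2 * (9 / 8) ^+ n./2 <= (3 / 2) ^+ n.
  rewrite -exprMn {2}nE exprD -mul2n exprM.
  have -> : (3 / 2 : R) ^+ 2 = 2 * (9 / 8) by rewrite expr2; lra.
  rewrite ler_peMl ?exprn_ge0 //; case: (odd n) => /=; rewrite ?expr0 ?expr1; lra.
have x_le : (n%:R : R) <= 8 * (9 / 8) ^+ n./2.
  exact: le_trans n_le (natr_double_le_exp n./2).
have a_gt0 : (0 : R) < 2 ^+ n./2 by apply: exprn_gt0.
set a := (2 : R) ^+ _ in exp_n a_gt0 *; set b := (9 / 8 : R) ^+ _ in exp_n x_le.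
set c := (3 / 2 : R) ^+ _ in exp_n *; set l := ln _ in ln_n *.
have ax : a * n%:R <= 8 * c by nra.
have : (0 : R) <= c by apply: exprn_ge0; lra.
nra.
Qed.

End RealBound.

Section EnumMatrix.
Variable F : fieldType.

Lemma mulmx_enum (p : nat) (J : finType) (m : 'I_p -> J -> F) (Y : 'cV[F]_#|J|) r :
  ((\matrix_(r, s) m r (enum_val s)) *m Y) r 0 = \sum_j m r j * Y (enum_rank j) 0.
Proof.
rewrite mxE (big_enum_val (A := J)) /=.
by apply: eq_bigr => s _; rewrite mxE enum_valK.
Qed.

Lemma mxrank_lt_col_ker (m n : nat) (A : 'M[F]_(m, n)) :
  (\rank A < n)%N -> exists2 w : 'cV[F]_n, w != 0 & A *m w = 0.
Proof.
move=> rA; have : kermx A^T != 0.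
  by rewrite -mxrank_eq0 mxrank_ker mxrank_tr -lt0n subn_gt0.
case/rowV0Pn => v /sub_kermxP vA v0; exists v^T.
  by rewrite -trmx0 (inj_eq trmx_inj).
by rewrite -[A]trmxK -trmx_mul vA trmx0.
Qed.

Lemma mxrank_lt_row_ker (m n : nat) (A : 'M[F]_(m, n)) (u : 'rV[F]_m) :
  u != 0 -> u *m A = 0 -> (\rank A < m)%N.
Proof.
move=> u0 /sub_kermxP/mxrankS; rewrite mxrank_ker -subn_gt0; apply: leq_trans.
by rewrite lt0n mxrank_eq0.
Qed.

Lemma fun_kernel_neq0 (I J : finType) (a : I -> J -> F) :
  (#|I| < #|J|)%N \/
  (#|I| <= #|J|)%N /\ (exists2 u : I -> F, exists i, u i != 0 & forall j, \sum_i u i * a i j = 0) ->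
  exists2 d : J -> F, exists j, d j != 0 & forall i, \sum_j a i j * d j = 0.
Proof.
pose A : 'M[F]_(#|I|, #|J|) := \matrix_(r, s) a (enum_val r) (enum_val s).
move=> Icard; have rankA : (\rank A < #|J|)%N.
  case: Icard => [lt | [le [u [i ui] uA]]].
    exact: leq_ltn_trans (rank_leq_row A) lt.
  apply: leq_trans le; apply: (@mxrank_lt_row_ker _ _ A (\row_r u (enum_val r))).
    apply: contraNneq ui => /matrixP /(_ 0 (enum_rank i)).
    by rewrite !mxE enum_rankK => ->.
  apply/matrixP => z s; rewrite (ord1 z) !mxE -[RHS](uA (enum_val s)) (big_enum_val (A := I)) /=.
  by apply: eq_bigr => r _; rewrite !mxE.
have [w w0 Aw] := mxrank_lt_col_ker rankA.
exists (fun j => w (enum_rank j) 0).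
  have [s ws] : exists s, w s 0 != 0.
    apply/existsP; apply: contraNT w0 => /existsPn w0.
    by apply/eqP/matrixP => s z; rewrite (ord1 z) mxE; apply/eqP/negbNE.
  by exists (enum_val s); rewrite enum_valK.
move=> i; have := congr1 (fun M : 'cV[F]_#|I| => M (enum_rank i) 0) Aw.
by rewrite (@mulmx_enum _ _ (fun r => a (enum_val r))) mxE enum_rankK.
Qed.

End EnumMatrix.

Section Extensions.
Variable R : realType.

Lemma has_extension_with_fun (d : nat) (P : set 'cV[R]_d) (I J K : finType)
    (a : I -> J -> R) (b : I -> R) (c : K -> J -> R) (e : K -> R) (f : 'I_d -> J -> R) :
  (forall x, P x <-> exists y : J -> R,
     [/\ forall i, \sum_j a i j * y j <= b i,
         forall k, \sum_j c k j * y j = e k &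
         forall r, x r 0 = \sum_j f r j * y j]) ->
  has_extension_with P #|I|.
Proof.
move=> HP.
exists #|J|, #|K|, (\matrix_(r, s) a (enum_val r) (enum_val s)), (\col_r b (enum_val r)).
exists (\matrix_(r, s) c (enum_val r) (enum_val s)), (\col_r e (enum_val r)).
exists (\matrix_(r, s) f r (enum_val s)), 0.
rewrite predeqE => x; split.
- case=> Y [HA HC] <-{x}; apply/HP; exists (fun j => Y (enum_rank j) 0); split.
  + move=> i; have := HA (enum_rank i).
    by rewrite (@mulmx_enum _ _ _ (fun r => a (enum_val r))) mxE enum_rankK.
  + move=> k; have := congr1 (fun M : 'cV[R]_#|K| => M (enum_rank k) 0) HC.
    by rewrite (@mulmx_enum _ _ _ (fun r => c (enum_val r))) mxE enum_rankK.
  + by move=> r; rewrite addr0 mulmx_enum.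
- case/HP=> y [Ha Hc Hf]; pose Y : 'cV[R]_#|J| := \col_s y (enum_val s).
  have YE j : Y (enum_rank j) 0 = y j by rewrite mxE enum_rankK.
  exists Y; first split.
  + move=> r; rewrite (@mulmx_enum _ _ _ (fun r => a (enum_val r))) mxE.
    by under eq_bigr do rewrite YE; exact: Ha.
  + apply/matrixP => r z; rewrite (ord1 z) (@mulmx_enum _ _ _ (fun r => c (enum_val r))) mxE.
    by under eq_bigr do rewrite YE; exact: Hc.
  + apply/matrixP => r z; rewrite (ord1 z) addr0 mulmx_enum Hf.
    by under eq_bigr do rewrite YE.
Qed.

Lemma xc_le (d : nat) (P : set 'cV[R]_d) (m : nat) :
  has_extension_with P m -> (xc P <= m)%N.
Proof.
move=> Pm; rewrite /xc; case: pselect => [h|[]]; last by exists m; apply/asboolP.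
by case: ex_minnP => m0 _; apply; apply/asboolP.
Qed.

End Extensions.

Definition crossing (T : finType) (c : T -> bool) (S : {set T}) : bool :=
  [exists x in S, exists y in S, c x != c y].

Lemma crossing2 (T : finType) (c : T -> bool) (p q : T) :
  crossing c [set p; q] = (c p != c q).
Proof.
apply/existsP/idP => [[x /andP [x_pq /existsP [y /andP [y_pq cxy]]]]|cpq].
  move: x_pq y_pq cxy; rewrite !inE.
  by case/orP => /eqP ->; case/orP => /eqP ->; rewrite ?eqxx // eq_sym.
by exists p; rewrite !inE eqxx /=; apply/existsP; exists q; rewrite !inE eqxx orbT.
Qed.

Section BipartiteKernel.
Variables (F : fieldType) (T H : finType) (ends : H -> {set T}) (c : T -> bool).
Hypothesis ends_bipartite : forall h, exists p q, ends h = [set p; q] /\ c p != c q.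

Lemma card_ends (h : H) : (#|ends h| <= 2)%N.
Proof. by have [p [q [-> _]]] := ends_bipartite h; rewrite cards2; case: (_ != _). Qed.

Lemma double_count_ends (Q : {set T}) :
  (\sum_(v in Q) #|[set h | v \in ends h]| = \sum_h #|Q :&: ends h|)%N.
Proof.
under eq_bigr do rewrite -sum1dep_card.
rewrite (exchange_big_dep xpredT) //=; apply: eq_bigr => h _.
by rewrite sum1dep_card; congr #|_|; apply/setP => v; rewrite !inE.
Qed.

Lemma ends_sub_of_card (Q : {set T}) :
  (forall v, v \in Q -> 2 <= #|[set h | v \in ends h]|)%N -> (#|H| <= #|Q|)%N ->
  #|Q| = #|H| /\ forall h, ends h \subset Q.
Proof.
move=> deg_ge2 HQ.
have sum_ge : (2 * #|Q| <= \sum_h #|Q :&: ends h|)%N.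
  by rewrite -double_count_ends mulnC -sum_nat_const; apply: leq_sum.
have ends_le2 h : (#|Q :&: ends h| <= 2)%N.
  exact: leq_trans (subset_leq_card (subsetIr _ _)) (card_ends h).
have sum_le := leqif_sum (fun h (_ : true) => leqif_eq (ends_le2 h)).
rewrite sum_nat_const cardT -cardE in sum_le.
have eqQH : #|Q| = #|H|.
  apply/eqP; rewrite eqn_leq HQ andbT -(@leq_pmul2r 2) // mulnC.
  exact: leq_trans sum_ge sum_le.
have /forallP full : [forall h, #|Q :&: ends h| == 2%N].
  by rewrite -(geq_leqif sum_le) -eqQH mulnC.
split=> // h; apply/setIidPr/eqP; rewrite eqEcard subsetIr /=.
by rewrite (eqP (full h)) card_ends.
Qed.

Lemma bipartite_kernel (Q : {set T}) :
  (0 < #|H|)%N -> (forall v, v \in Q -> #|[set h | v \in ends h]| != 1%N) ->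
  exists2 d : H -> F, exists h, d h != 0 &
    forall v, v \in Q -> \sum_(h | v \in ends h) d h = 0.
Proof.
move=> H_gt0 Q_deg.
pose Q' := [set v in Q | [exists h, v \in ends h]].
have deg_ge2 v : v \in Q' -> (2 <= #|[set h | v \in ends h]|)%N.
  rewrite inE => /andP [vQ /existsP [h vh]].
  have : (0 < #|[set h | v \in ends h]|)%N by apply/card_gt0P; exists h; rewrite inE.
  by have := Q_deg v vQ; case: #|_| => [|[|]].
pose a (v : {v in Q'}) h : F := if val v \in ends h then 1 else 0.
have [d [h0 dh0] dker] : exists2 d : H -> F, exists h, d h != 0 &
    forall v, \sum_h a v h * d h = 0.
  apply: fun_kernel_neq0; rewrite card_sig.
  have -> : #|[pred v | v \in Q']| = #|Q'| by [].
  have [lt|ge] := ltnP #|Q'| #|H|; [by left | right].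
  (* Here every edge has both ends in Q', and the +-1 colour vector is a left kernel vector. *)
  have [eqQH ends_sub] := ends_sub_of_card deg_ge2 ge.
  split; first by rewrite eqQH.
  have [v0 v0Q'] : exists v, v \in Q' by apply/card_gt0P; rewrite eqQH.
  exists (fun v => if c (val v) then 1 else -1).
    by exists (exist _ v0 v0Q'); case: ifP; rewrite ?oppr_eq0 oner_eq0.
  move=> h; have [p [q [ehpq cpq]]] := ends_bipartite h.
  rewrite -(big_sub _ (fun v => (if c v then 1 else -1) * (if v \in ends h then 1 else 0))).
  rewrite (big_setID (ends h)) /= [X in _ + X]big1 ?addr0; last first.
    by move=> v; rewrite !inE => /andP [/negbTE -> _]; rewrite mulr0.
  rewrite (setIidPr (ends_sub h)) ehpq big_setU1 ?big_set1 ?inE; last first.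
    by apply: contraNneq cpq => ->.
  rewrite !eqxx orbT !mulr1; move: cpq.
  by case: (c p); case: (c q) => //= _; rewrite ?addrN ?addNr.
exists d; first by exists h0.
move=> v vQ; have [vQ'|vQ'] := boolP (v \in Q').
  rewrite -[RHS](dker (exist _ v vQ')) big_mkcond; apply: eq_bigr => h _.
  by rewrite /a /=; case: ifP; rewrite ?mul1r ?mul0r.
apply: big1 => h vh; case/negP: vQ'.
by rewrite inE vQ; apply/existsP; exists h.
Qed.

End BipartiteKernel.

Lemma ler_sum_term (R : numDomainType) (X : finType) (P : pred X) (F : X -> R) j :
  P j -> (forall i, P i -> 0 <= F i) -> F j <= \sum_(i | P i) F i.
Proof.
move=> Pj F_ge0; rewrite (bigD1 j) //= lerDl sumr_ge0 // => i /andP [Pi _].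
exact: F_ge0.
Qed.

Lemma ler_sum_term2 (R : numDomainType) (X : finType) (P : pred X) (F : X -> R) j1 j2 :
  j1 != j2 -> P j1 -> P j2 -> (forall i, P i -> 0 <= F i) ->
  F j1 + F j2 <= \sum_(i | P i) F i.
Proof.
move=> j12 P1 P2 F_ge0; rewrite (bigD1 j1) //= (bigD1 j2) /=; last by rewrite P2 eq_sym.
rewrite addrA lerDl sumr_ge0 // => i /andP [/andP [Pi _] _]; exact: F_ge0.
Qed.

Lemma exists_boundary_step (R : realFieldType) (I : finType) (alpha beta : I -> R) :
  (forall i, 0 <= alpha i) -> (forall i, beta i < 0 -> 0 < alpha i) ->
  (exists i, beta i < 0) ->
  exists2 eps, 0 < eps &
    (forall i, 0 <= alpha i + eps * beta i) /\
    exists2 i, beta i < 0 & alpha i + eps * beta i = 0.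
Proof.
move=> alpha_ge0 alpha_gt0 [i0 beta_i0].
pose ratio i := alpha i / - beta i.
case: (@arg_minP _ _ _ i0 (fun i => beta i < 0) ratio beta_i0) => i beta_i ratio_min.
have beta_i' : 0 < - beta i by rewrite oppr_gt0.
exists (ratio i); first by rewrite divr_gt0 ?alpha_gt0.
split; last by exists i => //; rewrite /ratio; field; rewrite ltr0_neq0.
move=> j; have [beta_j|beta_j] := ltP (beta j) 0.
  have := ratio_min j beta_j; rewrite {2}/ratio ler_pdivlMr ?oppr_gt0 //.
  by rewrite mulrN => ?; lra.
by rewrite addr_ge0 // mulr_ge0 // ltW // divr_gt0 ?alpha_gt0.
Qed.

Section Matchings.
Variables (T : finType) (E : {set {set T}}).

Lemma matching_sub M S : is_matching E M -> S \in M -> S \in E.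
Proof. by case/andP => /subsetP sub _ /sub. Qed.

Lemma matching_meet M S1 S2 x : is_matching E M -> S1 \in M -> S2 \in M ->
  x \in S1 -> x \in S2 -> S1 = S2.
Proof.
case/andP=> _ /forall_inP disj S1M S2M x1 x2; apply/eqP; apply: contraT => S12.
have /forall_inP /(_ S2 S2M) := disj S1 S1M; rewrite S12 -setI_eq0 => /eqP S12_0.
have : x \in S1 :&: S2 by rewrite inE x1 x2.
by rewrite S12_0 inE.
Qed.

End Matchings.

Section CutMatchings.
Variables (R : realFieldType) (T : finType) (E : {set {set T}}).
Hypothesis E_card2 : forall S, S \in E -> #|S| = 2%N.

Definition edge (j : 'I_#|E|) : {set T} := @enum_val _ (mem E) j.

Lemma edge_in j : edge j \in E. Proof. exact: enum_valP. Qed.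

Lemma edge_inj : injective edge. Proof. exact: enum_val_inj. Qed.

Lemma edge2 j : exists p q, p != q /\ edge j = [set p; q].
Proof. exact/cards2P/eqP/E_card2/edge_in. Qed.

Definition deg (y : 'I_#|E| -> R) (v : T) : R := \sum_(j | v \in edge j) y j.

Lemma degD (y z : 'I_#|E| -> R) (eps : R) v :
  deg (fun j => y j + eps * z j) v = deg y v + eps * deg z v.
Proof. by rewrite /deg big_split /= -mulr_sumr. Qed.

(* The dilate by t of the matching polytope of the bipartite graph of edges cut by c. *)
Definition cut_feasible (c : T -> bool) (t : R) (y : 'I_#|E| -> R) :=
  [/\ forall j, 0 <= y j, forall j, ~~ crossing c (edge j) -> y j = 0
    & forall v, deg y v <= t].

Definition indicator (M : {set {set T}}) (j : 'I_#|E|) : R := if edge j \in M then 1 else 0.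

Definition matching_comb (t : R) (y : 'I_#|E| -> R) :=
  exists mu : {set {set T}} -> R,
    [/\ forall M, 0 <= mu M, forall M, ~~ is_matching E M -> mu M = 0,
        \sum_M mu M = t & forall j, y j = \sum_M mu M * indicator M j].

Lemma matching_deg_le1 M v : is_matching E M -> deg (indicator M) v <= 1.
Proof.
move=> mM; have [[j1 /andP [v1 M1]]|none] :=
  pselect (exists j, (v \in edge j) && (edge j \in M)).
  rewrite /deg (bigD1 j1) //= /indicator M1 big1 ?addr0 // => j /andP [vj j1j].
  case: ifP => // Mj; case/negP: j1j; apply/eqP; apply: edge_inj.
  exact: matching_meet mM Mj M1 vj v1.
rewrite /deg big1 ?ler01 // => j vj; rewrite /indicator; case: ifP => // Mj.
by case: none; exists j; rewrite vj Mj.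
Qed.

Lemma cut_feasible_le c t y j : cut_feasible c t y -> y j <= t.
Proof.
case=> y_ge0 _ deg_le; have [p [q [_ ej]]] := edge2 j.
apply: le_trans (deg_le p); apply: ler_sum_term => [|i _]; last exact: y_ge0.
by rewrite ej !inE eqxx.
Qed.

Lemma matching_comb_integral c t y : 0 <= t -> cut_feasible c t y ->
  (forall j, y j = 0 \/ y j = t) -> matching_comb t y.
Proof.
move=> t_ge0 [y_ge0 _ deg_le] y01.
have [t0|t_neq0] := eqVneq t 0.
  exists (fun _ => 0); split=> //; first by rewrite big1.
  move=> j; rewrite big1 => [|M _]; last by rewrite mul0r.
  by case: (y01 j) => ->; rewrite ?t0.
pose M0 := [set edge j | j in [set j | y j == t]].
have M0E j : (edge j \in M0) = (y j == t) by rewrite mem_imset ?inE //; exact: edge_inj.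
have M0_matching : is_matching E M0.
  apply/andP; split; first by apply/subsetP => _ /imsetP [j _ ->]; exact: edge_in.
  apply/forall_inP => _ /imsetP [j1 j1t ->]; apply/forall_inP => _ /imsetP [j2 j2t ->].
  apply/implyP => e12; rewrite -setI_eq0; apply/eqP/setP => v; rewrite !inE.
  apply/negP => /andP [v1 v2]; have j12 : j1 != j2 by apply: contraNneq e12 => ->.
  have := @ler_sum_term2 _ _ (fun j => v \in edge j) y _ _ j12 v1 v2 (fun i _ => y_ge0 i).
  move: j1t j2t; rewrite !inE => /eqP -> /eqP ->; rewrite -/(deg y v).
  have := deg_le v; have : 0 < t by rewrite lt_def t_neq0.
  lra.
exists (fun M => if M == M0 then t else 0); split.
- by move=> M; case: eqP.
- by move=> M; case: eqP => // ->; rewrite M0_matching.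
- by rewrite (bigD1 M0) //= eqxx big1 ?addr0 // => M /negbTE ->.
- move=> j; rewrite (bigD1 M0) //= eqxx big1 ?addr0 => [|M /negbTE ->]; last by rewrite mul0r.
  rewrite /indicator M0E; case: (y01 j) => ->; rewrite ?eqxx ?mulr1 //.
  by rewrite eq_sym (negbTE t_neq0) mulr0.
Qed.

Lemma matching_comb_convex t y y1 y2 (lambda : R) :
  0 <= lambda <= 1 -> matching_comb t y1 -> matching_comb t y2 ->
  (forall j, y j = lambda * y1 j + (1 - lambda) * y2 j) -> matching_comb t y.
Proof.
case/andP=> l_ge0 l_le1 [mu1 [mu1_ge0 mu1_0 mu1_t mu1_y]] [mu2 [mu2_ge0 mu2_0 mu2_t mu2_y]] yE.
exists (fun M => lambda * mu1 M + (1 - lambda) * mu2 M); split.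
- by move=> M; rewrite addr_ge0 // mulr_ge0 // subr_ge0.
- by move=> M nM; rewrite mu1_0 // mu2_0 // !mulr0 addr0.
- by rewrite big_split /= -!mulr_sumr mu1_t mu2_t; ring.
- move=> j; rewrite yE mu1_y mu2_y !mulr_sumr -big_split /=.
  by apply: eq_bigr => M _; ring.
Qed.

Definition fractional (t : R) (y : 'I_#|E| -> R) := [set j | (y j != 0) && (y j != t)].

Definition slack (t : R) (y : 'I_#|E| -> R) := [set v | deg y v != t].

Definition potential (t : R) (y : 'I_#|E| -> R) := (#|fractional t y| + #|slack t y|)%N.

Lemma tight_fractional_deg_neq1 c t y v : cut_feasible c t y -> deg y v = t ->
  #|[set j in fractional t y | v \in edge j]| != 1%N.
Proof.
move=> fy tight; apply/negP => /cards1P [j1 Hj1].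
have : j1 \in [set j in fractional t y | v \in edge j] by rewrite Hj1 inE.
rewrite inE => /andP [j1_frac vj1].
have y_01 j : v \in edge j -> j != j1 -> y j = 0 \/ y j = t.
  move=> vj jj1; have : j \notin fractional t y.
    apply: contra jj1 => j_frac.
    by rewrite -in_set1 -Hj1 inE j_frac.
  by rewrite inE negb_and !negbK => /orP [] /eqP; [left | right].
have [y_ge0 _ _] := fy; have y_le := @cut_feasible_le c t y _ fy.
move: j1_frac; rewrite inE => /andP [y1_neq0 y1_neqt].
move: tight; rewrite /deg (bigD1 j1) //=.
have [[j2 /and3P [vj2 j21 y2t]]|no_t] :=
  pselect (exists j, [&& v \in edge j, j != j1 & y j == t]).
  have := @ler_sum_term _ _ (fun j => (v \in edge j) && (j != j1)) y j2.
  rewrite vj2 j21 (eqP y2t) => /(_ isT (fun i _ => y_ge0 i)).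
  have := y_ge0 j1; have := lt_neqAle 0 (y j1); rewrite eq_sym y1_neq0 y_ge0 /=.
  lra.
rewrite big1 => [|j /andP [vj jj1]]; last first.
  case: (y_01 j vj jj1) => // yjt; case: no_t; exists j.
  by rewrite vj jj1 yjt eqxx.
by rewrite addr0 => /eqP; rewrite (negbTE y1_neqt).
Qed.

Definition feasible_direction (t : R) (y d : 'I_#|E| -> R) :=
  [/\ exists j, d j != 0, forall j, j \notin fractional t y -> d j = 0
    & forall v, deg y v = t -> deg d v = 0].

Lemma feasible_directionN t y d :
  feasible_direction t y d -> feasible_direction t y (fun j => - d j).
Proof.
case=> [[j0 dj0] d_frac d_tight]; split.
- by exists j0; rewrite oppr_eq0.
- by move=> j /d_frac ->; rewrite oppr0.
- by move=> v /d_tight; rewrite /deg sumrN => ->; rewrite oppr0.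
Qed.

Lemma exists_feasible_direction c t y : cut_feasible c t y ->
  fractional t y != set0 -> exists d, feasible_direction t y d.
Proof.
move=> fy frac_neq0.
pose H := {j in fractional t y}.
have frac_crossing (h : H) : exists p q, edge (val h) = [set p; q] /\ c p != c q.
  have [p [q [pq ehpq]]] := edge2 (val h); exists p, q; split=> //.
  rewrite -crossing2 -ehpq; apply: contraTT (valP h) => ncross.
  by case: fy => _ y0 _; rewrite inE y0 // eqxx.
have [|v|d [h dh] d_tight] := bipartite_kernel R frac_crossing (Q := [set v | deg y v == t]).
- by rewrite card_sig card_gt0.
- rewrite inE => /eqP tight; rewrite -(card_imset _ val_inj).
  have -> : val @: [set h : H | v \in edge (val h)] = [set j in fractional t y | v \in edge j].
    apply/setP => j; rewrite inE; apply/imsetP/andP => [[h vh ->]|[j_frac vj]].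
      by rewrite inE in vh; rewrite (valP h).
    by exists (exist _ j j_frac); rewrite ?inE.
  exact: tight_fractional_deg_neq1 fy tight.
exists (fun j => if insub j is Some h then d h else 0); split.
- by exists (val h); rewrite valK.
- by move=> j j_frac; rewrite insubF //; apply/negbTE.
- move=> v tight; rewrite -[RHS](d_tight v) ?inE ?tight //.
  rewrite /deg big_mkcond (bigID (fun j => j \in fractional t y)) /=.
  rewrite [X in _ + X]big1 ?addr0 => [|j /negbTE j_frac]; last by rewrite insubF // if_same.
  by rewrite -big_mkcondr big_sub_cond; apply: eq_bigr => h0 _; rewrite valK.
Qed.

Lemma feasible_direction_supp t y d : feasible_direction t y d ->
  (forall j, d j != 0 -> j \in fractional t y) /\
  (forall v, deg d v != 0 -> v \in slack t y).
Proof.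
case=> _ d_frac d_tight; split=> [j|v]; first by apply: contraNT => /d_frac ->.
by rewrite inE; apply: contra => /eqP /d_tight ->.
Qed.

Lemma potential_step_lt t y d eps : feasible_direction t y d ->
  (exists2 j, j \in fractional t y & j \notin fractional t (fun j => y j + eps * d j)) \/
  (exists2 v, v \in slack t y & v \notin slack t (fun j => y j + eps * d j)) ->
  (potential t (fun j => (y j + eps * d j)%R) < potential t y)%N.
Proof.
case=> _ d_frac d_tight new_tight.
have frac_sub : fractional t (fun j => y j + eps * d j) \subset fractional t y.
  apply/subsetP => j; apply: contraLR => j_frac.
  by rewrite inE d_frac // mulr0 addr0; rewrite inE in j_frac.
have slack_sub : slack t (fun j => y j + eps * d j) \subset slack t y.
  apply/subsetP => v; apply: contraLR; rewrite !inE !negbK degD => /eqP tight.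
  by rewrite d_tight // mulr0 addr0 tight.
case: new_tight => [[j j_in j_out]|[v v_in v_out]].
  have /proper_card lt : fractional t (fun j => y j + eps * d j) \proper fractional t y.
    by apply/properP; split=> //; exists j.
  by rewrite -addSn leq_add ?subset_leq_card.
have /proper_card lt : slack t (fun j => y j + eps * d j) \proper slack t y.
  by apply/properP; split=> //; exists v.
by rewrite -addnS leq_add ?subset_leq_card.
Qed.

Lemma push_step c t y d : cut_feasible c t y -> feasible_direction t y d ->
  exists2 eps, 0 < eps &
    cut_feasible c t (fun j => y j + eps * d j) /\
    (potential t (fun j => (y j + eps * d j)%R) < potential t y)%N.
Proof.
move=> fy dir; have [y_ge0 y_noncross deg_le] := fy; have y_le j := cut_feasible_le j fy.
have [frac_d slack_d] := feasible_direction_supp dir; case: (dir) => [[j0 dj0] d_frac _].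
(* Slacks of y >= 0, y <= t and deg y <= t, and their rates of change along d. *)
pose alpha (i : bool * 'I_#|E| + T) := match i with
  | inl (true, j) => y j | inl (false, j) => t - y j | inr v => t - deg y v end.
pose beta (i : bool * 'I_#|E| + T) := match i with
  | inl (true, j) => d j | inl (false, j) => - d j | inr v => - deg d v end.
have [|||eps eps_gt0 [alpha_ge0 [i beta_i alpha_i]]] :=
  exists_boundary_step (alpha := alpha) (beta := beta).
- by case=> [[[] j]|v] /=; rewrite ?subr_ge0.
- case=> [[[] j]|v] /= beta_lt0.
  + have : j \in fractional t y by rewrite frac_d ?ltr0_neq0.
    by rewrite inE lt_def eq_sym y_ge0 andbT => /andP [].
  + have : j \in fractional t y by rewrite frac_d // -oppr_eq0 ltr0_neq0.
    by rewrite inE subr_gt0 lt_def y_le andbT => /andP [_]; rewrite eq_sym.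
  + have : v \in slack t y by rewrite slack_d // -oppr_eq0 ltr0_neq0.
    by rewrite inE subr_gt0 lt_def deg_le andbT eq_sym.
- have [dj0_lt0|dj0_ge0] := ltP (d j0) 0; first by exists (inl (true, j0)).
  by exists (inl (false, j0)); rewrite /= oppr_lt0 lt_def dj0 dj0_ge0.
exists eps => //; split.
  split=> [j|j ncross|v].
  - exact: alpha_ge0 (inl (true, j)).
  - by rewrite y_noncross // d_frac ?mulr0 ?addr0 // inE y_noncross // eqxx.
  - by have := alpha_ge0 (inr v); rewrite /= degD mulrN; lra.
apply: potential_step_lt dir _.
case: i beta_i alpha_i => [[[] j]|v] /= beta_lt0 alpha_i; [left | left | right].
- by exists j; rewrite ?frac_d ?ltr0_neq0 // inE alpha_i eqxx.
- exists j; first by rewrite frac_d // -oppr_eq0 ltr0_neq0.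
  by rewrite !inE negb_and !negbK; apply/orP; right; apply/eqP; lra.
- exists v; first by rewrite slack_d // -oppr_eq0 ltr0_neq0.
  by rewrite inE degD negbK; apply/eqP; lra.
Qed.

Lemma matching_comb_of_cut_feasible c t y :
  0 <= t -> cut_feasible c t y -> matching_comb t y.
Proof.
move=> t_ge0; have [n] := ubnP (potential t y).
elim: n y => // n IH y; rewrite ltnS => pot_le fy.
have [frac0|frac_neq0] := eqVneq (fractional t y) set0.
  apply: matching_comb_integral t_ge0 fy _ => j.
  have : j \notin fractional t y by rewrite frac0 inE.
  by rewrite inE negb_and !negbK => /orP [] /eqP; [left | right].
have [d dir] := exists_feasible_direction fy frac_neq0.
have [e1 e1_gt0 [fy1 pot1]] := push_step fy dir.
have [e2 e2_gt0 [fy2 pot2]] := push_step fy (feasible_directionN dir).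
have e12_gt0 : 0 < e1 + e2 by rewrite addr_gt0.
apply: (@matching_comb_convex _ _ _ _ (e2 / (e1 + e2)) _ (IH _ _ fy1) (IH _ _ fy2)).
- apply/andP; split; first by rewrite divr_ge0 // ltW.
  by rewrite ler_pdivrMr // mul1r lerDr ltW.
- exact: leq_trans pot1 pot_le.
- exact: leq_trans pot2 pot_le.
- by move=> j; field; rewrite lt0r_neq0.
Qed.

End CutMatchings.

Lemma bernoulli_expn (b m : nat) : (b ^ m.+1 + m.+1 * b ^ m <= b.+1 ^ m.+1)%N.
Proof.
elim: m => [|m IH]; first by rewrite !expn1 expn0 muln1 addn1.
rewrite (expnS b.+1) (expnS b m.+1) (expnS b m).
have := leq_mul (leqnn b.+1) IH; rewrite (expnS b m).
set X := (b ^ m)%N; nia.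
Qed.

Lemma expn_pred_le_half (b s : nat) : (0 < s)%N ->
  (2 ^ s * b ^ (b.+1 * s) <= b.+1 ^ (b.+1 * s))%N.
Proof.
move=> s_gt0; rewrite !expnM -expnMn leq_exp2r //.
apply: leq_trans (bernoulli_expn b b); rewrite (expnS b b).
set X := (b ^ b)%N; nia.
Qed.

(* At most 2^e - 1 nonempty matchings, each missed by all of 2^h s colourings with
   probability at most (1 - 2^-h)^(2^h s) <= 2^-s. *)
Lemma union_bound_lt (n h e : nat) : (0 < h)%N -> (h <= n)%N ->
  ((2 ^ e - 1) * (2 ^ n - 2 ^ (n - h)) ^ (2 ^ h * maxn 1 e) <
   (2 ^ n) ^ (2 ^ h * maxn 1 e))%N.
Proof.
move=> h_gt0 h_le; set s := maxn 1 e; set a := (2 ^ (n - h))%N.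
have [b r_eq] : exists b, (2 ^ h = b.+1)%N by exists (2 ^ h).-1; rewrite prednK ?expn_gt0.
have b_gt0 : (0 < b)%N by rewrite -ltnS -r_eq -{1}(expn0 2) ltn_exp2l.
have -> : (2 ^ n = a * b.+1)%N by rewrite -r_eq -expnD subnK.
have -> : (a * b.+1 - a = a * b)%N by rewrite mulnS addKn.
rewrite r_eq !expnMn mulnCA ltn_pmul2l ?expn_gt0 //.
apply: leq_trans (expn_pred_le_half b (leq_maxl 1 e)).
rewrite ltn_pmul2r ?expn_gt0 ?b_gt0 //.
have : (2 ^ e <= 2 ^ s)%N by rewrite leq_exp2l ?leq_maxr.
have : (0 < 2 ^ e)%N by rewrite expn_gt0.
rewrite -/s; lia.
Qed.

Lemma card_bigcup_le (I X : finType) (P : pred I) (F : I -> {set X}) :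
  (#|\bigcup_(i | P i) F i| <= \sum_(i | P i) #|F i|)%N.
Proof.
elim/big_rec2: _ => [|i n U _ le]; first by rewrite cards0.
by rewrite (leq_trans (leq_card_setU _ _).1) ?leq_add2l.
Qed.

Section Covering.
Variables (T : finType) (E : {set {set T}}).
Hypothesis E_card2 : forall S, S \in E -> #|S| = 2%N.

Lemma matching_card M : is_matching E M -> (2 * #|M| <= #|T|)%N.
Proof.
move=> mM; have tM : trivIset M.
  apply/trivIsetP => A B AM BM AB; rewrite -setI_eq0; apply/eqP/setP => x; rewrite !inE.
  by apply/negP => /andP [xA xB]; move: AB; rewrite (matching_meet mM AM BM xA xB) eqxx.
have card_cover : #|cover M| = (#|M| * 2)%N.
  have [_] := leq_card_cover M; rewrite tM => /eqP ->.
  by rewrite -sum_nat_const; apply: eq_bigr => A AM; exact/E_card2/(matching_sub mM AM).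
by rewrite mulnC -card_cover max_card.
Qed.

Definition first_end (S : {set T}) := [set x in S | [pick z in S] == Some x].

Definition first_ends (D : {set {set T}}) := \bigcup_(S in D) first_end S.

Lemma mem_first_ends M (D : {set {set T}}) S x :
  is_matching E M -> D \subset M -> S \in M -> x \in S ->
  (x \in first_ends D) = (S \in D) && ([pick z in S] == Some x).
Proof.
move=> mM DM SM xS; apply/bigcupP/andP => [[S' S'D]|[SD pz]]; last by exists S; rewrite ?inE ?xS.
rewrite inE => /andP [xS' pz].
by rewrite -(matching_meet mM (subsetP DM _ S'D) SM xS' xS).
Qed.

Definition flip_uncrossed (M : {set {set T}}) (g : {ffun T -> bool}) : {ffun T -> bool} :=
  [ffun x => g x (+) (x \in first_ends [set S in M | ~~ crossing g S])].

Lemma flip_uncrossed_crossing M g S : is_matching E M -> S \in M ->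
  crossing (flip_uncrossed M g) S.
Proof.
move=> mM SM; have [p [q [pq eS]]] : exists p q, p != q /\ S = [set p; q].
  exact/cards2P/eqP/E_card2/(matching_sub mM SM).
have [z zS pz] : exists2 z, z \in S & [pick z in S] = Some z.
  by case: pickP => [z zS|no]; [exists z | move: (no p); rewrite eS !inE eqxx].
have DM : [set S in M | ~~ crossing g S] \subset M by apply/subsetP => S'; rewrite inE => /andP [].
have flipE x : x \in S -> flip_uncrossed M g x = g x (+) ~~ crossing g S && (z == x).
  by move=> xS; rewrite ffunE (mem_first_ends mM DM SM xS) pz inE SM.
rewrite eS crossing2 !flipE ?eS ?inE ?eqxx ?orbT // -eS.
have z_pq : (z == p) || (z == q) by rewrite -in_set2 -eS.
rewrite eS crossing2; have [gpq|gpq] := eqVneq (g p) (g q); last by rewrite !addbF.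
have qp : (q == p) = false by rewrite eq_sym (negbTE pq).
by case/orP: z_pq => /eqP ->; rewrite eqxx ?(negbTE pq) ?qp gpq; case: (g q).
Qed.

Definition crossing_colorings (M : {set {set T}}) :=
  [set g : {ffun T -> bool} | [forall S in M, crossing g S]].

(* Flipping one endpoint of each uncut edge of M cuts all of M, and g is recovered from the
   flipped colouring together with the set of uncut edges. *)
Lemma card_crossing_colorings M : is_matching E M ->
  (2 ^ #|T| <= #|crossing_colorings M| * 2 ^ #|M|)%N.
Proof.
move=> mM; pose D (g : {ffun T -> bool}) := [set S in M | ~~ crossing g S].
pose flip g := (flip_uncrossed M g, D g).
have flip_inj : injective flip.
  move=> g1 g2 [e1 e2]; apply/ffunP => x.
  have := congr1 (fun f : {ffun T -> bool} => f x) e1; rewrite /= !ffunE -/(D g1) -/(D g2) e2.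
  by case: (g1 x); case: (g2 x); case: (x \in _).
have : flip @: setT \subset setX (crossing_colorings M) (powerset M).
  apply/subsetP => _ /imsetP [g _ ->]; rewrite !inE /=.
  apply/andP; split; last by apply/subsetP => S; rewrite inE => /andP [].
  by apply/forall_inP => S; apply: flip_uncrossed_crossing.
by move/subset_leq_card; rewrite card_imset // cardsX card_powerset cardsT card_ffun card_bool.
Qed.

Definition missing_families (k : nat) (M : {set {set T}}) :=
  [set F : {ffun 'I_k -> {ffun T -> bool}} | [forall i, F i \notin crossing_colorings M]].

Lemma card_missing_families M (k : nat) : is_matching E M ->
  (#|missing_families k M| <= (2 ^ #|T| - 2 ^ (#|T| - #|T|./2)) ^ k)%N.
Proof.
move=> mM; set n := #|T|; set h := n./2.
have -> : #|missing_families k M| = (#|~: crossing_colorings M| ^ k)%N.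
  rewrite -[in RHS](card_ord k) -card_ffun_on; apply: eq_card => F; rewrite inE.
  by apply/forallP/ffun_onP => F_out i; have := F_out i; rewrite !inE.
case: k => // k; rewrite leq_exp2r //.
have := cardsC (crossing_colorings M); rewrite card_ffun card_bool -/n.
have M_le_h : (#|M| <= h)%N by rewrite /h geq_half_double -mul2n matching_card.
have h_le : (h <= n)%N by rewrite /h leq_half_double -addnn; lia.
have nE : (2 ^ n = 2 ^ (n - h) * 2 ^ h)%N by rewrite -expnD subnK.
have : (2 ^ (n - h) <= #|crossing_colorings M|)%N.
  rewrite -(@leq_pmul2r (2 ^ h)) ?expn_gt0 // -nE.
  by apply: leq_trans (card_crossing_colorings mM) _; rewrite leq_mul2l leq_exp2l ?M_le_h ?orbT.
lia.
Qed.

Lemma card_nonempty_matchings :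
  (#|[set M | is_matching E M && (M != set0)]| <= 2 ^ #|E| - 1)%N.
Proof.
have : [set M | is_matching E M && (M != set0)] \subset powerset E :\ set0.
  by apply/subsetP => M; rewrite !inE => /andP [/andP [ME _] ->].
move/subset_leq_card; have := cardsD1 set0 (powerset E).
by rewrite card_powerset powersetE sub0set; lia.
Qed.

Lemma exists_crossing_family : (2 <= #|T|)%N ->
  exists f : 'I_(2 ^ #|T|./2 * maxn 1 #|E|) -> {ffun T -> bool},
    forall M, is_matching E M -> exists i, f i \in crossing_colorings M.
Proof.
move=> T_ge2; set n := #|T|; set h := n./2; set k := (2 ^ h * maxn 1 #|E|)%N.
have h_gt0 : (0 < h)%N by rewrite /h half_gt0.
have h_le : (h <= n)%N by rewrite /h leq_half_double -addnn; lia.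
have k_gt0 : (0 < k)%N by rewrite muln_gt0 expn_gt0 leq_max.
pose Ms := [set M | is_matching E M && (M != set0)].
have : (#|\bigcup_(M in Ms) missing_families k M| < #|[set: {ffun 'I_k -> {ffun T -> bool}}]|)%N.
  rewrite cardsT card_ffun card_ffun card_bool card_ord.
  apply: leq_ltn_trans (@card_bigcup_le _ _ (mem Ms) (missing_families k)) _.
  apply: leq_ltn_trans (union_bound_lt #|E| h_gt0 h_le).
  apply: (@leq_trans (#|Ms| * (2 ^ n - 2 ^ (n - h)) ^ k)).
    rewrite -sum_nat_const; apply: leq_sum => M; rewrite !inE => /andP [mM _].
    exact: card_missing_families.
  by rewrite leq_mul2r card_nonempty_matchings orbT.
move=> lt_all; have [F _ F_good] : exists2 F, F \in [set: {ffun 'I_k -> {ffun T -> bool}}] &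
    F \notin \bigcup_(M in Ms) missing_families k M.
  by apply/subsetPn; apply: contraTN lt_all => /subset_leq_card; rewrite leqNgt.
exists F => M mM; have [->|M_neq0] := eqVneq M set0.
  by exists (Ordinal k_gt0); rewrite inE; apply/forall_inP => S; rewrite inE.
have : F \notin missing_families k M.
  by apply: contra F_good => FM; apply/bigcupP; exists M; rewrite // inE mM M_neq0.
by rewrite inE negb_forall => /existsP [i]; rewrite negbK; exists i.
Qed.

End Covering.

Lemma sum_delta (R : pzSemiRingType) (X : finType) (x0 : X) (a : R) (y : X -> R) :
  \sum_x (if x == x0 then a else 0) * y x = a * y x0.
Proof. by rewrite (bigD1 x0) //= eqxx big1 ?addr0 // => x /negbTE ->; rewrite mul0r. Qed.

Section Balas.
Variables (R : realType) (T : finType) (E : {set {set T}}).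
Hypothesis E_card2 : forall S, S \in E -> #|S| = 2%N.
Variables (k : nat) (f : 'I_k -> {ffun T -> bool}).
Hypothesis f_covers : forall M, is_matching E M -> exists i, f i \in crossing_colorings M.

Definition cut_decomposable (x : 'cV[R]_#|E|) :=
  exists (y : 'I_k -> 'I_#|E| -> R) (t : 'I_k -> R),
    [/\ forall i, cut_feasible (f i) (t i) (y i), \sum_i t i = 1 &
        forall r, x r 0 = \sum_i y i r].

Lemma Pmatch_cut_decomposable x : @Pmatch R T E x -> cut_decomposable x.
Proof.
move=> [lam [lam_ge0 lam0 lam1 ->]].
pose owner M := [pick i | f i \in crossing_colorings M].
have owner_cross M i : owner M = Some i -> forall S, S \in M -> crossing (f i) S.
  by rewrite /owner; case: pickP => [i' /[!inE] /forall_inP cross [<-]|//].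
have owner_sum M (z : R) : \sum_i (if owner M == Some i then lam M * z else 0) = lam M * z.
  have [mM|nM] := boolP (is_matching E M); last by rewrite lam0 // mul0r big1 // => i; case: ifP.
  rewrite /owner; case: pickP => [i0 _|none]; last first.
    by have [i] := f_covers mM; rewrite none.
  rewrite (bigD1 i0) //= eqxx big1 ?addr0 // => i i0i.
  by case: eqP => // -[e]; rewrite e eqxx in i0i.
exists (fun i j => \sum_M (if owner M == Some i then lam M * indicator R M j else 0)).
exists (fun i => \sum_M (if owner M == Some i then lam M else 0)); split.
- move=> i; split.
  + move=> j; apply: sumr_ge0 => M _; case: ifP => // _.
    by rewrite mulr_ge0 // /indicator; case: ifP.
  + move=> j ncross; apply: big1 => M _; case: eqP => // /owner_cross cross.
    by rewrite /indicator; case: ifP => [/cross|]; rewrite ?(negbTE ncross) ?mulr0.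
  + move=> v; rewrite /deg exchange_big /=; apply: ler_sum => M _.
    case: ifP => _; last by rewrite big1.
    have [mM|nM] := boolP (is_matching E M); last by rewrite lam0 // big1 // => j _; rewrite mul0r.
    by rewrite -mulr_sumr -[X in _ <= X]mulr1 ler_wpM2l // matching_deg_le1.
- rewrite exchange_big /= -lam1; apply: eq_bigr => M _.
  by rewrite -[RHS]mulr1 -owner_sum; apply: eq_bigr => i _; rewrite mulr1.
- move=> r; rewrite summxE exchange_big /=; apply: eq_bigr => M _.
  by rewrite owner_sum !mxE.
Qed.

Lemma cut_decomposable_Pmatch x : (0 < #|T|)%N -> cut_decomposable x -> @Pmatch R T E x.
Proof.
move=> T_gt0 [y [t [fy t1 xE]]].
have [v0 _] : exists v0 : T, v0 \in T by apply/card_gt0P.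
have t_ge0 i : 0 <= t i.
  have [y_ge0 _ deg_le] := fy i; apply: le_trans (deg_le v0).
  by apply: sumr_ge0 => j _; exact: y_ge0.
have /choice [mu mu_spec] := fun i => matching_comb_of_cut_feasible E_card2 (t_ge0 i) (fy i).
exists (fun M => \sum_i mu i M); split.
- by move=> M; apply: sumr_ge0 => i _; case: (mu_spec i).
- by move=> M nM; apply: big1 => i _; case: (mu_spec i) => _ -> .
- by rewrite exchange_big /= -t1; apply: eq_bigr => i _; case: (mu_spec i).
- apply/matrixP => r z; rewrite (ord1 z) xE summxE.
  under [RHS]eq_bigr do rewrite !mxE.
  under [RHS]eq_bigr do rewrite mulr_suml.
  rewrite exchange_big /=; apply: eq_bigr => i _.
  by case: (mu_spec i) => _ _ _ ->.
Qed.

(* Balas' system for the convex hull of the union of the cut polytopes: variables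
   y_(i,j) (edge j in block i) and t_i; inequalities -y_(i,j) <= 0 and
   deg y_i v - t_i <= 0; equations y_(i,j) = 0 for edges not cut by f i and
   \sum_i t_i = 1; projection x_j = \sum_i y_(i,j). *)
Local Notation var := ('I_k * 'I_#|E| + 'I_k)%type.

Definition ineq_coef (r : 'I_k * 'I_#|E| + 'I_k * T) (z : var) : R :=
  match r, z with
  | inl p, _ => if z == inl p then -1 else 0
  | inr (i, v), inl (i', j) => if (i' == i) && (v \in edge j) then 1 else 0
  | inr (i, v), inr i' => if i' == i then -1 else 0
  end.

Definition eq_coef (r : 'I_k * 'I_#|E| + unit) (z : var) : R :=
  match r, z with
  | inl (i, j), _ => if crossing (f i) (edge j) then 0 else if z == inl (i, j) then 1 else 0
  | inr _, inl _ => 0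
  | inr _, inr _ => 1
  end.

Definition eq_rhs (r : 'I_k * 'I_#|E| + unit) : R := if r is inr _ then 1 else 0.

Definition proj_coef (r : 'I_#|E|) (z : var) : R :=
  if z is inl (_, j) then (if j == r then 1 else 0) else 0.

Lemma sum_ineq_coef_edge i j (Y : var -> R) :
  \sum_z ineq_coef (inl (i, j)) z * Y z = - Y (inl (i, j)).
Proof. by rewrite sum_delta mulN1r. Qed.

Lemma sum_ineq_coef_vertex i v (Y : var -> R) :
  \sum_z ineq_coef (inr (i, v)) z * Y z = deg (fun j => Y (inl (i, j))) v - Y (inr i).
Proof.
rewrite big_sumType /= sum_delta mulN1r; congr (_ - _).
rewrite (eq_bigr (fun q => ineq_coef (inr (i, v)) (inl (q.1, q.2)) * Y (inl (q.1, q.2)))) => [|[] //].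
rewrite -(pair_bigA _ (fun i' j => ineq_coef (inr (i, v)) (inl (i', j)) * Y (inl (i', j)))) /=.
rewrite (bigD1 i) //= [X in _ + X]big1 ?addr0 => [|i' /negbTE i'i]; last first.
  by apply: big1 => j _; rewrite i'i mul0r.
rewrite /deg [RHS]big_mkcond; apply: eq_bigr => j _.
by rewrite eqxx /=; case: ifP; rewrite ?mul1r ?mul0r.
Qed.

Lemma sum_eq_coef_edge i j (Y : var -> R) :
  \sum_z eq_coef (inl (i, j)) z * Y z = if crossing (f i) (edge j) then 0 else Y (inl (i, j)).
Proof.
rewrite /eq_coef; case: ifP => _; last by rewrite sum_delta mul1r.
by rewrite big1 // => z _; rewrite mul0r.
Qed.

Lemma sum_eq_coef_weights (Y : var -> R) :
  \sum_z eq_coef (inr tt) z * Y z = \sum_i Y (inr i).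
Proof.
rewrite big_sumType /= big1 ?add0r => [|z _]; last by rewrite mul0r.
by apply: eq_bigr => i _; rewrite mul1r.
Qed.

Lemma sum_proj_coef r (Y : var -> R) : \sum_z proj_coef r z * Y z = \sum_i Y (inl (i, r)).
Proof.
rewrite big_sumType /= [X in _ + X]big1 ?addr0 => [|z _]; last by rewrite mul0r.
rewrite (eq_bigr (fun q => proj_coef r (inl (q.1, q.2)) * Y (inl (q.1, q.2)))) => [|[] //].
rewrite -(pair_bigA _ (fun i j => proj_coef r (inl (i, j)) * Y (inl (i, j)))) /=.
by apply: eq_bigr => i _; rewrite sum_delta mul1r.
Qed.

Lemma cut_decomposableE x : cut_decomposable x <->
  exists Y : var -> R,
    [/\ forall r, \sum_z ineq_coef r z * Y z <= 0,
        forall r, \sum_z eq_coef r z * Y z = eq_rhs r &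
        forall r, x r 0 = \sum_z proj_coef r z * Y z].
Proof.
split.
- case=> y [t [fy t1 xE]].
  exists (fun z => match z with inl (i, j) => y i j | inr i => t i end); split.
  + case=> [[i j]|[i v]]; have [y_ge0 _ deg_le] := fy i.
      by rewrite sum_ineq_coef_edge oppr_le0.
    by rewrite sum_ineq_coef_vertex subr_le0.
  + case=> [[i j]|[]]; last by rewrite sum_eq_coef_weights.
    rewrite sum_eq_coef_edge /eq_rhs; case: ifP => // /negbT ncross.
    by case: (fy i) => _ -> .
  + by move=> r; rewrite sum_proj_coef xE.
- case=> Y [Y_ineq Y_eq Y_proj].
  exists (fun i j => Y (inl (i, j))), (fun i => Y (inr i)); split.
  + move=> i; split.
    * by move=> j; have := Y_ineq (inl (i, j)); rewrite sum_ineq_coef_edge oppr_le0.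
    * by move=> j ncross; have := Y_eq (inl (i, j)); rewrite sum_eq_coef_edge (negbTE ncross).
    * by move=> v; have := Y_ineq (inr (i, v)); rewrite sum_ineq_coef_vertex subr_le0.
  + by have := Y_eq (inr tt); rewrite sum_eq_coef_weights.
  + by move=> r; rewrite Y_proj sum_proj_coef.
Qed.

Lemma Pmatch_extension : (0 < #|T|)%N ->
  has_extension_with (@Pmatch R T E) (k * #|E| + k * #|T|).
Proof.
move=> T_gt0.
have -> : (k * #|E| + k * #|T|)%N = #|{: 'I_k * 'I_#|E| + 'I_k * T}|.
  by rewrite card_sum !card_prod !card_ord.
apply: (has_extension_with_fun (a := ineq_coef) (b := fun=> 0) (c := eq_coef) (e := eq_rhs)
  (f := proj_coef)) => x.
apply: iff_trans (cut_decomposableE x).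
by split; [exact: Pmatch_cut_decomposable | exact: cut_decomposable_Pmatch].
Qed.

End Balas.

Lemma bin2_mul2 n : ('C(n, 2) * 2 = n * n.-1)%N.
Proof. by elim: n => [|n IH] //; rewrite binS bin1 mulnDl IH; case: n {IH} => //= n; lia. Qed.

Lemma bin2_bound n : (4 * 'C(n, 2) * ('C(n, 2) + n) <= n ^ 4)%N.
Proof. have := bin2_mul2 n; case: n => [|n] //=; nia. Qed.

Lemma card_edges_le (T : finType) (E : {set {set T}}) :
  (forall S, S \in E -> #|S| = 2%N) -> (#|E| <= 'C(#|T|, 2))%N.
Proof.
move=> E_card2; rewrite -card_draws; apply/subset_leq_card/subsetP => S SE.
by rewrite inE E_card2.
Qed.

Lemma xc_Pmatch_small (R : realType) (T : finType) (E : {set {set T}}) :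
  (forall S, S \in E -> #|S| = 2%N) -> (#|T| < 2)%N -> xc (@Pmatch R T E) = 0%N.
Proof.
move=> E_card2 T_lt2; have E0 : #|E| = 0%N.
  apply/eqP; rewrite cards_eq0; apply/eqP/setP => S; rewrite inE.
  by apply/negP => /E_card2 S2; have := max_card S; rewrite S2 leqNgt T_lt2.
apply/eqP; rewrite -leqn0 -(card_ord 0).
apply: xc_le; apply: (has_extension_with_fun (J := 'I_0) (K := 'I_0)
  (a := fun _ _ => 0) (b := fun _ => 0) (c := fun _ _ => 0) (e := fun _ => 0) (f := fun _ _ => 0)).
move=> x; have no_edge (r : 'I_#|E|) : False by case: r => m; rewrite E0.
split=> _; first by exists (fun _ => 0); split=> [[] //|[] //|r]; case: (no_edge r).
exists (fun M => if M == set0 then 1 else 0); split.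
- by move=> M; case: ifP.
- move=> M; case: eqP => // -> /negP []; rewrite /is_matching sub0set.
  by apply/forall_inP => S; rewrite inE.
- by rewrite (bigD1 set0) //= eqxx big1 ?addr0 // => M /negbTE ->.
- by apply/matrixP => r; case: (no_edge r).
Qed.

Lemma xc_Pmatch_le (R : realType) (T : finType) (E : {set {set T}}) :
  (forall S, S \in E -> #|S| = 2%N) -> (2 <= #|T|)%N ->
  (4 * xc (@Pmatch R T E) <= 2 ^ #|T|./2 * #|T| ^ 4)%N.
Proof.
move=> E_card2 T_ge2; have [f f_covers] := exists_crossing_family E_card2 T_ge2.
have := xc_le (Pmatch_extension R E_card2 f_covers (ltnW T_ge2)).
move=> /(leq_mul (leqnn 4)) /leq_trans; apply.
have E_le := card_edges_le E_card2.
have maxn_le : (maxn 1 #|E| <= 'C(#|T|, 2))%N by rewrite geq_max bin_gt0 T_ge2.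
rewrite -mulnDr -mulnA mulnCA leq_mul2l; apply/orP; right.
apply: leq_trans (bin2_bound #|T|); rewrite -mulnA leq_mul2l.
by rewrite leq_mul // leq_add2r.
Qed.

Theorem theorem4 (R : realType) (T : finType) (E : {set {set T}}) (n : nat)
    (hE : forall S, S \in E -> #|S| = 2%N) (hn : #|T| = n) :
  ((xc (@Pmatch R T E))%:R : R) <= ln (n%:R : R) * n%:R ^+ 3 * (3 / 2) ^+ n.
Proof.
have [n_lt2|n_ge2] := ltnP n 2.
  rewrite xc_Pmatch_small ?hn //.
  have -> : ln (n%:R : R) = 0 by case: n n_lt2 {hn} => [|[|]] // _; [exact: ln0 | exact: ln1].
  by rewrite !mul0r.
have : ((4 * xc (@Pmatch R T E))%:R <= (2 ^ n./2 * n ^ 4)%:R :> R).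
  by rewrite ler_nat -hn xc_Pmatch_le ?hn.
rewrite !natrM !natrX => xc_R.
have := ler_wpM2l (exprn_ge0 3 (ler0n R n)) (exp2_half_le R n_ge2).
move: xc_R; rewrite !exprS expr0; set X := (_ %:R : R); set a := 2%:R ^+ _; nra.
Qed.
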